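(* Let $n\ge 1$ and let $G$ be a random threshold graph on $n$ vertices. Then for every integer $k\ge 0$, $$P\big(h(\mathrm{seq}(G))=k\big)=\left(\tfrac12\right)^{n-1}\binom{n-1}{\left\lfloor \frac{n+k}{2}\right\rfloor}.$$
   Context: A threshold graph on $n\ge1$ vertices is built from a base vertex $v_0$ by successively adding $v_1,\dots,v_{n-1}$, each either isolated (adjacent to no earlier vertex) or dominating (adjacent to all earlier vertices); its creation sequence $\mathrm{seq}(G)=s_1\cdots s_{n-1}$ has $s_i=1$ if $v_i$ is dominating and $s_i=0$ otherwise, and each unlabeled threshold graph on $n$ vertices corresponds to exactly one binary string of length $n-1$. A random threshold graph on $n$ vertices is one whose creation sequence is uniformly distributed over all $2^{n-1}$ binary strings of length $n-1$ (equivalently, the graph obtained from $n$ independent uniform weights on $[0,1]$, joining two vertices iff their weights sum to more than $1$). For a binary string $s=s_1\cdots s_m$ and $0\le k\le m$, the $k$-th tail is $s_{m-k+1}\cdots s_m$ (the empty string for $k=0$); $z_k(s)$ and $u_k(s)$ denote the numbers of zeros and ones in the $k$-th tail. Define $h(s)=\max_{0\le k\le m}\{z_k(s)-u_k(s)\}$. *)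

From HB Require Import structures.
From mathcomp Require Import all_boot all_order all_algebra.
Set Implicit Arguments. Unset Strict Implicit. Unset Printing Implicit Defensive.
Import Order.TTheory GRing.Theory Num.Theory.

(* Binary strings are sequences of booleans: true = 1 (dominating), false = 0 (isolated). *)

Definition tail (s : seq bool) (k : nat) : seq bool := drop (size s - k) s.

Definition zk (s : seq bool) (k : nat) : nat := count (fun b => ~~ b) (tail s k).
Definition uk (s : seq bool) (k : nat) : nat := count id (tail s k).

(* h(s) = max_{0 <= k <= m} (z_k(s) - u_k(s)), as an integer. The initial value 0
   of the fold is harmless since the k = 0 term equals 0. *)
Definition h (s : seq bool) : int :=
  \big[Num.max/0%R]_(0 <= k < (size s).+1) ((zk s k)%:Z - (uk s k)%:Z)%R.

(* Probability, for a random threshold graph on n vertices (creation sequence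
   uniform over the 2^(n-1) binary strings of length n-1), that the creation
   sequence satisfies predicate P. *)
Definition prob_seq (n : nat) (P : seq bool -> bool) : rat :=
  ((#|[set t : (n.-1).-tuple bool | P (tval t)]|)%:R / (2 ^ n.-1)%:R)%R.

From mathcomp Require Import all_boot all_order all_algebra zify.
Import Order.TTheory GRing.Theory Num.Theory.

(* Appending a bit b to s shifts every tail difference z_k - u_k by -1 (b = 1)
   or +1 (b = 0) and adds the new empty tail, so
   h (s ++ [b]) = max(0, h s + 1 - 2b): h is the simple random walk driven by
   the bits, reflected at 0. The numbers c_m(k) of strings of length m with
   h = k therefore obey Pascal's rule, with the reflected boundary case
   c_(m+1)(0) = c_m(0) + c_m(1), whose solution is binomial(m, ceil((m+k)/2)). *)

Fixpoint bitseqs (m : nat) : seq bitseq :=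
  if m is m'.+1 then [seq rcons s b | s <- bitseqs m', b <- [:: true; false]]
  else [:: [::]].

Lemma mem_bitseqs m s : (s \in bitseqs m) = (size s == m).
Proof.
elim: m s => [|m IH] s; first by rewrite inE; case: s.
apply/allpairsP/idP => [[[s' b] /= [Hs' _ ->]]|].
  by rewrite size_rcons eqSS -IH.
case/lastP: s => [//|s b]; rewrite size_rcons eqSS -IH => Hs.
by exists (s, b); split => //; case: b.
Qed.

Lemma uniq_bitseqs m : uniq (bitseqs m).
Proof.
elim: m => [//|m IH]; apply: allpairs_uniq => //.
by move=> [s b] [s' b'] _ _ /= /rcons_inj.
Qed.

Lemma count_bitseqsS (P : pred bitseq) m :
  count P (bitseqs m.+1) =
  count (P \o rcons^~ true) (bitseqs m) + count (P \o rcons^~ false) (bitseqs m).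
Proof.
rewrite /=; elim: (bitseqs m) => [//|s l IH] /=.
by rewrite IH addnACA !addnA.
Qed.

Lemma card_tuple_bool (P : pred bitseq) m :
  #|[set t : m.-tuple bool | P t]| = count P (bitseqs m).
Proof.
rewrite cardsE cardE /enum_mem -enumT size_filter -(count_map val P).
apply/permP/uniq_perm; rewrite ?uniq_bitseqs //.
  by rewrite map_inj_uniq ?enum_uniq //; apply: val_inj.
move=> s; rewrite mem_bitseqs; apply/mapP/idP => [[t _ ->]|Hs].
  by rewrite size_tuple.
by exists (Tuple Hs); rewrite ?mem_enum.
Qed.

Local Open Scope ring_scope.

Definition tail_excess (s : bitseq) (k : nat) : int := (zk s k)%:Z - (uk s k)%:Z.

Definition bit_excess (b : bool) : int := if b then -1 else 1.

Lemma tail_excess0 s : tail_excess s 0 = 0.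
Proof. by rewrite /tail_excess /zk /uk /tail subn0 drop_size. Qed.

Lemma tail_excess_rcons s b k : (k <= size s)%N ->
  tail_excess (rcons s b) k.+1 = tail_excess s k + bit_excess b.
Proof.
move=> Hk; rewrite /tail_excess /zk /uk /tail size_rcons subSS.
rewrite drop_rcons ?leq_subr // -cats1 !count_cat /=; case: b => /=; lia.
Qed.

Lemma bigmax0_ge0 {I : Type} (r : seq I) (P : pred I) (F : I -> int) :
  0 <= \big[Num.max/0]_(i <- r | P i) F i.
Proof. by elim/big_rec: _ => // i x _ Hx; rewrite le_max Hx orbT. Qed.

Lemma h_ge0 s : 0 <= h s.
Proof. exact: bigmax0_ge0. Qed.

Lemma max_bigmax0_addr {I : Type} (r : seq I) (F : I -> int) (d : int) :
  Num.max d (\big[Num.max/0]_(i <- r) (F i + d)) =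
  Num.max 0 (\big[Num.max/0]_(i <- r) F i + d).
Proof.
elim: r => [|i r IH]; rewrite ?big_nil ?big_cons; first lia.
by move: IH; set a := \big[_/_]_(_ <- _) _; set b := \big[_/_]_(_ <- _) _; lia.
Qed.

Lemma h_rcons s b : h (rcons s b) = Num.max 0 (h s + bit_excess b).
Proof.
have hE t : h t = \big[Num.max/0]_(0 <= k < (size t).+1) tail_excess t k by [].
rewrite !hE size_rcons big_nat_recl // tail_excess0.
under eq_big_nat => i /andP[_ Hi] do rewrite tail_excess_rcons //.
rewrite big_nat_recl // tail_excess0 add0r max_bigmax0_addr.
rewrite [X in _ = Num.max 0 (X + _)]big_nat_recl // tail_excess0.
have := bigmax0_ge0 (index_iota 0 (size s)) xpredT (fun i => tail_excess s i.+1).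
by set B := \big[_/_]_(_ <= _ < _) _; lia.
Qed.

Local Close Scope ring_scope.

Definition count_h (m k : nat) : nat := count (fun s => h s == k) (bitseqs m).

Lemma count_h0 k : count_h 0 k = (k == 0).
Proof. by rewrite /count_h /= /h big_nat_recl // big_geq //= addn0; case: k. Qed.

Lemma count_hS0 m : count_h m.+1 0 = count_h m 0 + count_h m 1.
Proof.
rewrite /count_h count_bitseqsS -[RHS]count_predUI.
by congr (_ + _); apply: eq_count => s /=; rewrite h_rcons /bit_excess;
  have := h_ge0 s; lia.
Qed.

Lemma count_hSS m j : count_h m.+1 j.+1 = count_h m j.+2 + count_h m j.
Proof.
rewrite /count_h count_bitseqsS.
by by congr (_ + _); apply: eq_count => s /=; rewrite h_rcons /bit_excess;
  have := h_ge0 s; lia.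
Qed.

Lemma count_hE m k : count_h m k = 'C(m, uphalf (m + k)).
Proof.
elim: m k => [|m IH] k; first by rewrite count_h0 bin0n; case: k.
case: k => [|j].
- have uphalf_sub : uphalf m = m - m./2.
    by rewrite uphalf_half -{2}(odd_double_half m) -addnn; lia.
  rewrite count_hS0 !IH !addn0 addn1 /= uphalf_sub bin_sub; last first.
    by rewrite leq_half_double -addnn; lia.
  by rewrite binS addnC.
- by rewrite count_hSS !IH addSn !addnS /= binS addnC.
Qed.

Theorem mainTheorem2 (n k : nat) (hn : 1 <= n) :
  prob_seq n (fun s => h s == Posz k) =
  ((1 / 2 : rat) ^+ (n - 1) * ('C(n - 1, (n + k)./2))%:R)%R.
Proof.
case: n hn => [//|m] _.
rewrite /prob_seq /= (card_tuple_bool (fun s => h s == k)) -/(count_h m k).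
by rewrite count_hE subSS subn0 natrX div1r exprVn mulrC.
Qed.
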